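(* Let $N\ge2$, $d\ge1$, let $E\subset\mathbb{Z}_N^d$, and let $\Sigma\subset\mathbb{Z}_N^d$ be a nonempty Salem set at level $\Lambda_{\text{Salem}}>0$. Then for every nonzero $f:\mathbb{Z}_N^d\to\mathbb{C}$ supported in $E$ whose Fourier transform $\hat f$ is supported in $\Sigma$, $$|E|\cdot|\Sigma|^{3/4}\ \ge\ N^d\sqrt{\frac{1-\mathrm{dens}(\Sigma)}{\Lambda_{\text{Salem}}}},$$ where $\mathrm{dens}(\Sigma)=N^{-d}|\Sigma|$.
   Context: $\chi(t)=e^{2\pi i t/N}$, $\hat f(m)=N^{-d}\sum_{x\in\mathbb{Z}_N^d}\chi(-x\cdot m)f(x)$. For a set $S$ we identify $S$ with its indicator function, so $\hat S(z)=N^{-d}\sum_{x\in S}\chi(-x\cdot z)$. A set $S\subset\mathbb{Z}_N^d$ is a Salem set at level $\Lambda_{\text{Salem}}$ if $|\hat S(z)|\le \Lambda_{\text{Salem}}N^{-d}|S|^{1/2}$ for all $z\ne 0$. *)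

From HB Require Import structures.
From mathcomp Require Import all_boot all_order all_algebra.
From mathcomp Require Import reals trigo exp.
From mathcomp Require Export complex.
Set Implicit Arguments. Unset Strict Implicit. Unset Printing Implicit Defensive.
Import Order.TTheory GRing.Theory Num.Theory.
Local Open Scope ring_scope.
Local Open Scope complex_scope.

(* Z_N^d as row vectors over 'Z_N (used only with 1 < N) *)
Definition ZNd (N d : nat) := 'rV['Z_N]_d.

Definition dotZ (N d : nat) (x m : ZNd N d) : 'Z_N := \sum_(i < d) x ord0 i * m ord0 i.

(* chi(t) = e^{2 pi i t / N}, t taken via its representative in [0, N) *)
Definition chi (R : realType) (N : nat) (t : 'Z_N) : complex R :=
  (cos (2 * pi * (val t)%:R / N%:R)) +i* (sin (2 * pi * (val t)%:R / N%:R)).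

Definition fourier (R : realType) (N d : nat) (f : ZNd N d -> complex R) (m : ZNd N d)
  : complex R :=
  ((N%:R ^- d : R)%:C) * \sum_(x : ZNd N d) chi R (- dotZ x m) * f x.

Definition indic (R : realType) (N d : nat) (S : {set ZNd N d}) (x : ZNd N d) : complex R :=
  if x \in S then 1 else 0.

Definition Salem (R : realType) (N d : nat) (S : {set ZNd N d}) (L : R) : Prop :=
  forall z : ZNd N d, z != 0 ->
    `| fourier (indic R S) z | <= ((L * N%:R ^- d * Num.sqrt (#|S|%:R)) : R)%:C.

Definition dens (R : realType) (N d : nat) (S : {set ZNd N d}) : R :=
  N%:R ^- d * #|S|%:R.

From HB Require Import structures.
From mathcomp Require Import all_boot all_order all_algebra.
From mathcomp Require Import reals trigo exp.
From mathcomp Require Import complex.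
From mathcomp Require Import ring lra.
Import Order.TTheory GRing.Theory Num.Theory.
Local Open Scope ring_scope.

Set Implicit Arguments. Unset Strict Implicit. Unset Printing Implicit Defensive.

(* Fourier inversion bounds |f(x)| by N^-d |Sigma| ||f||_1; summing over the
   support E gives the uncertainty principle N^d <= |E| |Sigma|.  Since
   f^ = f^ 1_Sigma, f is also reproduced by convolution with the transform of
   1_Sigma: f(x) = sum_y f(y) 1_Sigma^(y - x).  The term y = x contributes
   dens(Sigma) f(x) and the Salem bound controls all the others, so
   (1 - dens Sigma) |f(x)| <= L N^-d |Sigma|^(1/2) ||f||_1, and summing over E
   gives (1 - dens Sigma) N^d <= L |E| |Sigma|^(1/2).  The product of the two
   inequalities is the square of the claim. *)

Section NormSums.
Variables (V : numDomainType) (T : finType).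
Implicit Types (g : T -> V) (E : {set T}).

Lemma sum_norm_gt0 g : (exists x, g x != 0) -> 0 < \sum_x `|g x|.
Proof.
case=> x gx_neq0; rewrite (bigD1 x) //= ltr_wpDr ?normr_gt0 //.
by rewrite sumr_ge0.
Qed.

Lemma sum_norm_le_card E g (b : V) :
  (forall x, x \notin E -> g x = 0) -> (forall x, x \in E -> `|g x| <= b) ->
  \sum_x `|g x| <= b *+ #|E|.
Proof.
move=> g_supp g_le; rewrite (bigID (mem E)) /= [X in _ + X]big1 => [|x /g_supp->].
  by rewrite addr0 -sumr_const; apply: ler_sum.
by rewrite normr0.
Qed.

End NormSums.

Section Exponential.
Variable R : realType.

Definition expi (t : R) : complex R := (cos t +i* sin t)%C.

Lemma expiD (x y : R) : expi (x + y) = expi x * expi y.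
Proof.
rewrite /expi cosD sinD; apply/eqP; rewrite eq_complex /= eqxx /=.
by rewrite addrC mulrC [sin y * _]mulrC.
Qed.

Lemma expiDn2pi (x : R) (k : nat) : expi (x + pi *+ 2 * k%:R) = expi x.
Proof.
elim: k => [|k IHk]; first by rewrite mulr0 addr0.
by rewrite -natr1 mulrDr mulr1 addrA /expi cosD2pi sinD2pi.
Qed.

Lemma norm_expi (x : R) : `|expi x| = 1.
Proof. by rewrite normc_def /= cos2Dsin2 sqrtr1. Qed.

Lemma expi_neq1 (x : R) : 0 < x < pi *+ 2 -> expi x != 1.
Proof.
move=> /andP[x_gt0 x_lt2pi]; apply/negP => /eqP[] cos_x _.
(* cos x = 2 cos (x/2)^2 - 1 = 1 would force sin (x/2) = 0. *)
have sin_half_gt0 : 0 < sin (x / 2).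
  by apply: sin_gt0_pi; rewrite divr_gt0 //= ltr_pdivrMr // mulr_natr.
have half_x : x / 2 *+ 2 = x by rewrite -mulr_natr divfK ?pnatr_eq0.
have := sin2cos2 (x / 2); have := cos_mulr2n (x / 2); rewrite half_x cos_x.
move: sin_half_gt0; set c := cos _; set s := sin _ => *; nra.
Qed.

End Exponential.

Section Characters.
Variables (R : realType) (N : nat).
Hypothesis N_gt1 : (1 < N)%N.

Let N_gt0 : (0 : R) < N%:R.
Proof. by rewrite ltr0n ltnW. Qed.

Lemma Zp_valD (a b : 'Z_N) : val (a + b) = ((val a + val b) %% N)%N.
Proof.
have modZp m : (m %% (Zp_trunc N).+2 = m %% N)%N by rewrite Zp_cast.
exact: modZp.
Qed.

Lemma Zp_val_lt (t : 'Z_N) : (val t < N)%N.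
Proof. by have [m m_lt] := t; rewrite /= -[X in (_ < X)%N]Zp_cast. Qed.

Lemma chiE (t : 'Z_N) : chi R t = expi (2 * pi * (val t)%:R / N%:R).
Proof. by []. Qed.

Lemma chi0 : chi R (0 : 'Z_N) = 1.
Proof. by rewrite chiE /= mulr0 mul0r /expi cos0 sin0. Qed.

Lemma chiD (a b : 'Z_N) : chi R (a + b) = chi R a * chi R b.
Proof.
rewrite !chiE -expiD Zp_valD -(expiDn2pi _ ((val a + val b) %/ N)); congr expi.
rewrite -mulrDl -mulrDr -natrD [in RHS](divn_eq (val a + val b) N) natrD natrM.
by field; rewrite gt_eqF.
Qed.

Lemma norm_chi (t : 'Z_N) : `|chi R t| = 1.
Proof. exact: norm_expi. Qed.

Lemma chi_neq1 (t : 'Z_N) : t != 0 -> chi R t != 1.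
Proof.
move=> t_neq0; rewrite chiE; apply: expi_neq1.
have t_gt0 : (0 < val t)%N by rewrite lt0n; apply: contra t_neq0 => /eqP vt0; apply/eqP/val_inj.
have u_gt0 : 0 < (val t)%:R / N%:R :> R by rewrite divr_gt0 // ltr0n.
have u_lt1 : (val t)%:R / N%:R < 1 :> R by rewrite ltr_pdivrMr // mul1r ltr_nat Zp_val_lt.
have := pi_gt0 R; rewrite -mulrA -mulr_natl.
move: u_gt0 u_lt1; set u := _ / _ => *; apply/andP; split; nra.
Qed.

Lemma norm_sum_chi_le (T : finType) (a : T -> 'Z_N) (g : T -> complex R) :
  `|\sum_t chi R (a t) * g t| <= \sum_t `|g t|.
Proof.
apply: le_trans (ler_norm_sum _ _ _) _.
by apply: ler_sum => t _; rewrite normrM norm_chi mul1r.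
Qed.

End Characters.

Section DotProduct.
Variables N d : nat.
Implicit Types x y m : ZNd N d.

Lemma dotZC x m : dotZ x m = dotZ m x.
Proof. by apply: eq_bigr => i _; rewrite mulrC. Qed.

Lemma dotZ0l m : dotZ 0 m = 0.
Proof. by rewrite /dotZ big1 // => i _; rewrite mxE mul0r. Qed.

Lemma dotZDr x m m' : dotZ x (m + m') = dotZ x m + dotZ x m'.
Proof. by rewrite /dotZ -big_split; apply: eq_bigr => i _; rewrite mxE mulrDr. Qed.

Lemma dotZBl x y m : dotZ (x - y) m = dotZ x m - dotZ y m.
Proof. by rewrite /dotZ -sumrB; apply: eq_bigr => i _; rewrite !mxE mulrBl. Qed.

Lemma dotZNl x m : dotZ (- x) m = - dotZ x m.
Proof. by rewrite -sub0r dotZBl dotZ0l sub0r. Qed.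

Lemma dotZ_delta x i : dotZ x (delta_mx ord0 i) = x ord0 i.
Proof.
rewrite /dotZ (bigD1 i) //= big1 ?addr0 => [|j j_neq_i]; first by rewrite mxE !eqxx mulr1.
by rewrite mxE (negbTE j_neq_i) andbF mulr0.
Qed.

End DotProduct.

Section Fourier.
Variables (R : realType) (N d : nat).
Hypothesis N_gt1 : (1 < N)%N.
Implicit Types (x y m z : ZNd N d) (f g : ZNd N d -> complex R).

Local Notation invNd := ((N%:R ^- d : R)%:C)%C.

Lemma card_ZNd : #|{: ZNd N d}| = (N ^ d)%N.
Proof.
rewrite card_mx mul1n card_ord.
have powZp k : ((Zp_trunc N).+2 ^ k = N ^ k)%N by rewrite Zp_cast.
exact: powZp.
Qed.

Lemma invNd_mul_card : invNd * (N ^ d)%:R = 1.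
Proof.
rewrite -(rmorph_nat (real_complex R)) -rmorphM natrX mulVf ?expf_neq0 //.
by rewrite pnatr_eq0 -lt0n ltnW.
Qed.

Lemma invNd_ge0 : 0 <= invNd.
Proof. by rewrite ler0c invr_ge0 exprn_ge0 ?ler0n. Qed.

Lemma sum_chi_dot z : \sum_m chi R (dotZ z m) = if z == 0 then (N ^ d)%:R else 0.
Proof.
have [->|z_neq0] := eqVneq z 0.
  under eq_bigr do rewrite dotZ0l chi0.
  by rewrite sumr_const card_ZNd.
have [i zi_neq0] : exists i, z ord0 i != 0.
  apply/existsP; apply: contraNT z_neq0 => /existsPn z0; apply/eqP/rowP => i.
  by rewrite mxE; apply/eqP/negPn/z0.
set S := \sum_m _.
have S_invariant : S = chi R (z ord0 i) * S.
  rewrite {1}/S (reindex_inj (addIr (delta_mx ord0 i))) /= mulr_sumr.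
  by apply: eq_bigr => m _; rewrite dotZDr chiD // dotZ_delta mulrC.
have : (1 - chi R (z ord0 i)) * S = 0 by rewrite mulrBl mul1r -S_invariant subrr.
by move/eqP; rewrite mulf_eq0 subr_eq0 eq_sym (negbTE (chi_neq1 R N_gt1 zi_neq0)) => /eqP.
Qed.

Lemma sum_chi_mul_fourier x g f :
  \sum_m chi R (dotZ x m) * g m * fourier f m
  = \sum_y f y * (invNd * \sum_m chi R (dotZ (x - y) m) * g m).
Proof.
rewrite /fourier; under eq_bigr do rewrite !mulr_sumr.
rewrite exchange_big; apply: eq_bigr => y _; rewrite !mulr_sumr.
by apply: eq_bigr => m _; rewrite dotZBl chiD //; ring.
Qed.

Lemma fourier_inversion f x : f x = \sum_m chi R (dotZ x m) * fourier f m.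
Proof.
under eq_bigr do rewrite -[chi R _]mulr1.
rewrite sum_chi_mul_fourier.
under eq_bigr do under eq_bigr do rewrite mulr1.
under eq_bigr do rewrite sum_chi_dot subr_eq0.
rewrite (bigD1 x) //= eqxx invNd_mul_card mulr1 big1 ?addr0 // => y.
by rewrite eq_sym => /negbTE->; rewrite !mulr0.
Qed.

Lemma norm_fourier_le f m : `|fourier f m| <= invNd * \sum_x `|f x|.
Proof. by rewrite /fourier normrM ger0_norm ?invNd_ge0 // ler_wpM2l ?invNd_ge0 ?norm_sum_chi_le. Qed.

Lemma fourier_indic_conv (S : {set ZNd N d}) f x :
  (forall m, m \notin S -> fourier f m = 0) ->
  f x = \sum_y f y * fourier (indic R S) (y - x).
Proof.
move=> f_hat_supp; rewrite [LHS]fourier_inversion.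
have -> : \sum_m chi R (dotZ x m) * fourier f m
          = \sum_m chi R (dotZ x m) * indic R S m * fourier f m.
  apply: eq_bigr => m _; rewrite /indic.
  by case: ifPn => [_|/f_hat_supp->]; rewrite ?mulr1 ?mulr0.
rewrite sum_chi_mul_fourier; apply: eq_bigr => y _; rewrite /fourier.
by congr (_ * (_ * _)); apply: eq_bigr => m _; rewrite [dotZ m _]dotZC -dotZNl opprB.
Qed.

Lemma dens_le1 (S : {set ZNd N d}) : dens R S <= 1.
Proof.
rewrite /dens ler_pdivrMl ?exprn_gt0 ?ltr0n 1?ltnW // mulr1 -natrX ler_nat.
by rewrite -card_ZNd max_card.
Qed.

Lemma fourier_indic0 (S : {set ZNd N d}) : fourier (indic R S) 0 = (dens R S)%:C%C.
Proof.
rewrite /fourier /dens rmorphM /= rmorph_nat; congr (_ * _).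
under eq_bigr do rewrite dotZC dotZ0l oppr0 chi0 mul1r.
by rewrite /indic -big_mkcond sumr_const.
Qed.

End Fourier.

Section Uncertainty.
Variables (R : realType) (N d : nat) (E Sigma : {set ZNd N d}) (f : ZNd N d -> complex R).
Hypotheses (N_gt1 : (1 < N)%N) (f_neq0 : exists x, f x != 0)
  (f_supp : forall x, x \notin E -> f x = 0)
  (f_hat_supp : forall m, m \notin Sigma -> fourier f m = 0).

Local Notation invNd := ((N%:R ^- d : R)%:C)%C.

Let l1_gt0 : 0 < \sum_x `|f x| := sum_norm_gt0 f_neq0.

Lemma uncertainty_principle : (N ^ d <= #|Sigma| * #|E|)%N.
Proof.
set F := \sum_x `|f x|.
have f_le x : `|f x| <= invNd * F *+ #|Sigma|.
  rewrite (fourier_inversion N_gt1 f x); apply: le_trans (norm_sum_chi_le _ _) _.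
  by apply: sum_norm_le_card => // m _; apply: norm_fourier_le.
have : F <= invNd * F *+ #|Sigma| *+ #|E| by apply: sum_norm_le_card.
rewrite -mulrnA [invNd * F]mulrC -mulrnAr -{1}[F]mulr1 ler_pM2l //.
rewrite -(rmorph1 (real_complex R)) -rmorphMn lecR -mulr_natl mulrC ler_pdivlMl.
  by rewrite mulr1 -natrX ler_nat.
by rewrite exprn_gt0 // ltr0n ltnW.
Qed.

Lemma salem_bound (L : R) : 0 <= L -> Salem Sigma L ->
  1 - dens R Sigma <= #|E|%:R * (L * N%:R ^- d * Num.sqrt #|Sigma|%:R).
Proof.
move=> L_ge0 Sigma_salem.
set F := \sum_x `|f x|; set B := ((L * N%:R ^- d * Num.sqrt #|Sigma|%:R : R)%:C)%C.
set a := ((1 - dens R Sigma)%:C)%C.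
have B_ge0 : 0 <= B by rewrite ler0c !mulr_ge0 ?sqrtr_ge0 ?invr_ge0 ?exprn_ge0.
have a_ge0 : 0 <= a by rewrite ler0c subr_ge0 dens_le1.
have off_diag x : f x * a = \sum_(y | y != x) f y * fourier (indic R Sigma) (y - x).
  have := fourier_indic_conv N_gt1 x f_hat_supp.
  rewrite (bigD1 x) //= subrr fourier_indic0 => conv_x.
  by rewrite /a rmorphB /= mulrBr mulr1 {1}conv_x addrAC subrr add0r.
have f_le x : `|f x * a| <= F * B.
  rewrite off_diag; apply: le_trans (ler_norm_sum _ _ _) _.
  apply: (@le_trans _ _ (\sum_(y | y != x) `|f y| * B)).
    apply: ler_sum => y y_neq_x; rewrite normrM ler_wpM2l // Sigma_salem //.
    by rewrite subr_eq0.
  by rewrite /F mulr_suml [leRHS](bigD1 x) //= ler_wpDl // mulr_ge0.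
have : F * a <= F * B *+ #|E|.
  rewrite /F mulr_suml; under eq_bigr do rewrite -[a](ger0_norm a_ge0) -normrM.
  by apply: sum_norm_le_card => // x /f_supp->; rewrite mul0r.
by rewrite -mulrnAr ler_pM2l // -rmorphMn lecR -mulr_natl.
Qed.

End Uncertainty.

Lemma powR34_sqr (R : realType) (s : R) : 0 <= s -> powR s (3 / 4) ^+ 2 = s * Num.sqrt s.
Proof.
move=> s_ge0; rewrite -powR_mulrn ?powR_ge0 // -powRrM.
have -> : 3 / 4 * 2%:R = 1 + 2^-1 :> R by field.
have exp_neq0 : (1 + 2^-1 == 0 :> R) = false by rewrite gt_eqF // addr_gt0 ?invr_gt0.
by rewrite powRD ?exp_neq0 // powRr1 // powR12_sqrt.
Qed.

Theorem theorem3 (R : realType) (N d : nat) (hN : (1 < N)%N) (hd : (0 < d)%N)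
  (E Sigma : {set ZNd N d}) (hSigma : Sigma != set0) (L : R) (hL : 0 < L)
  (hSalem : Salem Sigma L)
  (f : ZNd N d -> complex R) (hf0 : exists x, f x != 0)
  (hfE : forall x, x \notin E -> f x = 0)
  (hfS : forall m, m \notin Sigma -> fourier f m = 0) :
  N%:R ^+ d * Num.sqrt ((1 - dens R Sigma) / L)
    <= #|E|%:R * powR (#|Sigma|%:R : R) (3 / 4).
Proof.
have N_gt0 : (0 : R) < N%:R by rewrite ltr0n ltnW.
set M := N%:R ^+ d : R; set e := #|E|%:R : R; set s := #|Sigma|%:R : R.
set a := 1 - dens R Sigma.
have M_gt0 : 0 < M by rewrite exprn_gt0.
have a_ge0 : 0 <= a by rewrite subr_ge0 dens_le1.
have e_ge0 : 0 <= e by rewrite ler0n.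
have card_le : M <= s * e.
  by rewrite /M /s /e -natrX -natrM ler_nat (uncertainty_principle hN hf0 hfE hfS).
have salem_le : M * (a / L) <= e * Num.sqrt s.
  rewrite mulrA ler_pdivrMr // -ler_pdivlMl //.
  suff -> : M^-1 * (e * Num.sqrt s * L) = e * (L * M^-1 * Num.sqrt s).
    by have := salem_bound hN hf0 hfE hfS (ltW hL) hSalem.
  by ring.
rewrite -ler_sqr ?nnegrE ?mulr_ge0 ?sqrtr_ge0 ?powR_ge0 ?(ltW M_gt0) //.
rewrite !exprMn sqr_sqrtr ?divr_ge0 ?(ltW hL) // powR34_sqr ?ler0n //.
have r_ge0 : 0 <= Num.sqrt s := sqrtr_ge0 s.
rewrite expr2 -mulrA; apply: le_trans (ler_wpM2l (ltW M_gt0) salem_le) _.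
apply: le_trans (ler_wpM2r (mulr_ge0 e_ge0 r_ge0) card_le) _.
by rewrite [leRHS](_ : _ = s * e * (e * Num.sqrt s)) //; ring.
Qed.
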